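(* Let $\mathcal{H}$ be a Hilbert space of functions $\mathcal{X}\to\mathcal{Y}$, and let $\mathcal{G}\subset\mathcal{F}\subseteq\mathcal{H}$ be function sets with $\mathcal{G}$ a proper subset of $\mathcal{F}$. For any interpretation algorithm $\mathcal{A}$ (with respect to $\mathcal{G}$), there exists $f\in\mathcal{F}$ such that, with respect to $f$, either $\mathcal{A}$ is not consistent, or $\mathcal{A}(f,x)$ is not efficient on $x$ for some $x\in\mathcal{X}$.
   Context: $\mathcal{X}$ is an input space, $\mathcal{Y}$ an output space, and $\mathcal{H}\subseteq\{\mathcal{X}\to\mathcal{Y}\}$ a Hilbert space of functions. $\mathcal{G}\subset\mathcal{H}$ is the set of ''interpretable'' functions and $\mathcal{F}\subset\mathcal{H}$ the set of models to be interpreted. An interpretation algorithm $\mathcal{A}$ takes $f\in\mathcal{H}$ and $x\in\mathcal{X}$ as inputs and outputs a function $\mathcal{A}(f,x)\in\mathcal{G}$. Given $f\in\mathcal{H}$, $\mathcal{A}$ is consistent with respect to $f$ if $\mathcal{A}(f,x)$ is the same function for every $x\in\mathcal{X}$. A model $g\in\mathcal{H}$ is efficient with respect to $f$ on $x\in\mathcal{X}$ if $g(x)=f(x)$. *)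

Definition interpretation_algorithm {X Y : Type}
  (H G : (X -> Y) -> Prop) (A : (X -> Y) -> X -> (X -> Y)) : Prop :=
  forall f x, H f -> G (A f x).

Definition consistent {X Y : Type} (A : (X -> Y) -> X -> (X -> Y))
  (f : X -> Y) : Prop :=
  forall x x' : X, A f x = A f x'.

Definition efficient {X Y : Type} (g f : X -> Y) (x : X) : Prop :=
  g x = f x.

Definition subset {X Y : Type} (S T : (X -> Y) -> Prop) : Prop :=
  forall f, S f -> T f.

Definition proper_subset {X Y : Type} (S T : (X -> Y) -> Prop) : Prop :=
  subset S T /\ exists f, T f /\ ~ S f.

From Stdlib Require Import Classical FunctionalExtensionality.

(* If A were consistent and efficient on some f in F \ G, the single
   explanation A f x would agree with f at every point, hence equal f;
   but it lies in G, while f does not. *)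

Lemma consistent_efficient_eq {X Y : Type} (A : (X -> Y) -> X -> (X -> Y))
  (f : X -> Y) (x0 : X) :
  consistent A f -> (forall x, efficient (A f x) f x) -> A f x0 = f.
Proof.
  intros Hcons Heff.
  apply functional_extensionality; intro x.
  rewrite (Hcons x0 x).
  apply Heff.
Qed.

Lemma consistent_efficient_in_range {X Y : Type} (x0 : X)
  (H G : (X -> Y) -> Prop) (A : (X -> Y) -> X -> (X -> Y)) (f : X -> Y) :
  interpretation_algorithm H G A -> H f ->
  consistent A f -> (forall x, efficient (A f x) f x) -> G f.
Proof.
  intros HA Hf Hcons Heff.
  rewrite <- (consistent_efficient_eq A f x0 Hcons Heff).
  exact (HA f x0 Hf).
Qed.

Theorem theorem1 (X Y : Type) (x0 : X)
  (H G F : (X -> Y) -> Prop)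
  (HGF : proper_subset G F) (HFH : subset F H)
  (A : (X -> Y) -> X -> (X -> Y))
  (HA : interpretation_algorithm H G A) :
  exists f : X -> Y, F f /\
    (~ consistent A f \/ exists x : X, ~ efficient (A f x) f x).
Proof.
  destruct HGF as [_ [f [Ff nGf]]].
  exists f; split; [exact Ff |].
  apply NNPP; intro Hgood.
  apply not_or_and in Hgood as [Hcons Heff].
  apply NNPP in Hcons.
  apply nGf, (consistent_efficient_in_range x0 H G A f HA (HFH f Ff) Hcons).
  intro x; apply NNPP; intro Hx; apply Heff; exists x; exact Hx.
Qed.
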